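(* For every graph $H$ (with at least one edge), there exists a constant $c(H) > 0$ such that $p_c(n,H) \geqslant c(H)\, n^{-1/\lambda^*(H)}$ for every $n \in \mathbb{N}$.
   Context: $\lambda^*(H) := \min_{e \in E(H)} \max_{F \subset H - e} \frac{e(F)}{v(F)}$, the maximum being over (nonempty) subgraphs $F$ of $H - e$. The $H$-bootstrap process on $K_n$ starting from $G \subset E(K_n)$: $G_0 = G$, $G_{t+1} = G_t \cup \{e \in E(K_n) : \exists\, H' \cong H,\ e \in H' \subset G_t \cup \{e\}\}$; $\langle G\rangle_H = \bigcup_t G_t$. $G_{n,p}$ is the Erdős–Rényi random graph. $p_c(n,H) = \inf\{p : \mathbb{P}(\langle G_{n,p}\rangle_H = K_n) \geqslant 1/2\}$. *)

From HB Require Import structures.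
From mathcomp Require Import all_boot all_order all_algebra.
From mathcomp Require Import all_classical all_reals exp.
Set Implicit Arguments. Unset Strict Implicit. Unset Printing Implicit Defensive.
Import Order.TTheory GRing.Theory Num.Theory.
Local Open Scope ring_scope.


Definition simple_graph (V : finType) (H : {set {set V}}) : Prop :=
  forall e, e \in H -> #|e| = 2%N.

(* max over nonempty subgraphs F = (S, D) of H - e of e(F)/v(F):
   S nonempty vertex set, D a subset of E(H) \ {e} with all edges inside S.
   (0 is a harmless neutral element: all densities are >= 0 and V is nonempty
   when H has an edge.) *)
Definition maxdens (R : realType) (V : finType) (H : {set {set V}}) (e : {set V}) : R :=
  \big[Num.max/0]_(F : {set V} * {set {set V}} |
        [&& F.1 != finset.set0, F.2 \subset H :\ e & [forall d in F.2, d \subset F.1]])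
     ((#|F.2|)%:R / (#|F.1|)%:R).

(* lambda^*(H) = min_{e in E(H)} maxdens H e.  The neutral element #|E(H)| is an
   upper bound of every density e(F)/v(F) (as v(F) >= 1), so for H with an
   edge this is exactly the minimum. *)
Definition lambda_star (R : realType) (V : finType) (H : {set {set V}}) : R :=
  \big[Num.min/(#|H|)%:R]_(e in H) maxdens R H e.

Definition Kn (n : nat) : {set {set 'I_n}} := [set e : {set 'I_n} | #|e| == 2%N].

Definition copy_edges (V : finType) (n : nat) (H : {set {set V}}) (f : V -> 'I_n)
  : {set {set 'I_n}} := [set f @: d | d : {set V} in H].

Definition boot_step (V : finType) (n : nat) (H : {set {set V}})
  (G : {set {set 'I_n}}) : {set {set 'I_n}} :=
  G :|: [set e in Kn n | [exists f : {ffun V -> 'I_n},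
           [&& injectiveb f, e \in copy_edges H f
             & copy_edges H f \subset G :|: [set e]]]].

Definition percolates (V : finType) (n : nat) (H : {set {set V}})
  (G : {set {set 'I_n}}) : Prop :=
  forall e, e \in Kn n -> exists t : nat, e \in iter t (boot_step H) G.

Definition prob_perc (R : realType) (V : finType) (n : nat) (H : {set {set V}})
  (p : R) : R :=
  \sum_(G : {set {set 'I_n}} | G \subset Kn n)
     (if `[< percolates H G >] then p ^+ #|G| * (1 - p) ^+ (#|Kn n| - #|G|) else 0).

Definition p_c (R : realType) (V : finType) (n : nat) (H : {set {set V}}) : R :=
  inf [set p : R | 0 <= p <= 1 /\ 2^-1 <= prob_perc n H p]%classic.

From HB Require Import structures.
From mathcomp Require Import all_boot all_order all_algebra.
From mathcomp Require Import all_classical all_reals exp.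
From mathcomp Require Import lra.
(* Give the finset lemmas precedence over their classical_sets namesakes. *)
From mathcomp Require Import fintype finset.
Import Order.TTheory GRing.Theory Num.Theory.
Local Open Scope ring_scope.

(* A graph G other than K_n can only percolate if the first bootstrap step adds an
   edge, i.e. if G already contains a copy of H - d for some edge d of H.  By the
   definition of lambda_star H, each H - d has a subgraph F with
   e(F) >= lambda_star H * v(F); so when p <= c n^(-1 / lambda_star H) the expected
   number n^v(F) p^e(F) of copies of F in G(n,p) is at most c.  A union bound over
   d and over the event G = K_n gives P(<G(n,p)>_H = K_n) <= (e(H) + 1) c, which is
   below 1/2 for c = 1/(4(e(H) + 1)). *)

Lemma sum_weight_supsets_le {R : numDomainType} {X : finType} {A B : {set X}} (p : R) :
  0 <= p <= 1 -> B \subset A ->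
  \sum_(G : {set X} | (G \subset A) && (B \subset G))
     p ^+ #|G| * (1 - p) ^+ (#|A| - #|G|) <= p ^+ #|B|.
Proof.
move=> /andP[p0 p1] BA.
have q0 : 0 <= 1 - p by rewrite subr_ge0.
(* [a i true] and [a i false] weigh the events "i \in G" and "i \notin G"; the
   product over i of their sums is p ^+ #|B|, and expanding it sums over all G. *)
pose a (i : X) (b : bool) : R := if b then (if i \in A then p else 0)
   else (if i \in B then 0 else if i \in A then 1 - p else 1).
have a0 i b : 0 <= a i b by case: b; rewrite /a; do ! case: ifP.
have prod_a : \prod_i (\sum_(b : bool) a i b) = p ^+ #|B|.
  rewrite -(prodr_const (mem B) p) [RHS]big_mkcond /=; apply: eq_bigr => i _.
  rewrite big_bool /a /=; have [iB|iB] := boolP (i \in B).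
    by rewrite (subsetP BA _ iB) addr0.
  by case: (i \in A); rewrite ?add0r // addrC subrK.
rewrite bigA_distr_bigA in prod_a.
rewrite -prod_a (reindex (fun G : {set X} => [ffun x => x \in G])) /=; last first.
  exists (fun f : {ffun X -> bool} => [set x | f x]) => G _.
    by apply/setP => x; rewrite inE ffunE.
  by apply/ffunP => x; rewrite ffunE inE.
rewrite [leRHS](bigID (fun G : {set X} => (G \subset A) && (B \subset G))) /=.
apply: ler_wpDr; first by apply: sumr_ge0 => G _; apply: prodr_ge0.
apply: ler_sum => G /andP[GA BG].
rewrite (eq_bigr (fun i => if i \in G then p else if i \in A then 1 - p else 1)); last first.
  move=> i _; rewrite ffunE /a; case: ifP => iG; first by rewrite (subsetP GA _ iG).
  by rewrite (contraFF (subsetP BG i) iG).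
rewrite (bigID (mem G)) /= (eq_bigr (fun _ => p)) => [|i ->//].
rewrite prodr_const (eq_bigr (fun i => if i \in A then 1 - p else 1)) => [|i /negbTE->//].
rewrite -big_mkcondr /= prodr_const.
suff -> : #|[pred i | (i \notin G) && (i \in A)]| = (#|A| - #|G|)%N by [].
rewrite -[in RHS](setIidPr GA) -cardsD.
by apply: eq_card => i; rewrite !inE andbC.
Qed.

Lemma ler_sum_term {R : numDomainType} {I : finType} (P : pred I) {F : I -> R} {j : I} :
  P j -> (forall i, P i -> 0 <= F i) -> F j <= \sum_(i | P i) F i.
Proof.
move=> Pj F0; rewrite (bigD1 j) //= lerDl sumr_ge0 // => i /andP[Pi _].
exact: F0.
Qed.

Lemma iter_boot_step_fixed {V : finType} {n : nat} {H : {set {set V}}}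
    {G : {set {set 'I_n}}} t :
  boot_step H G \subset G -> iter t (boot_step H) G = G.
Proof.
move=> stuck; elim: t => //= t ->.
by apply/eqP; rewrite eqEsubset stuck subsetUl.
Qed.

Lemma percolates_copy_minus_edge {V : finType} {n : nat} {H : {set {set V}}}
    {G : {set {set 'I_n}}} :
  G \subset Kn n -> G != Kn n -> percolates H G ->
  exists d, exists f : {ffun V -> 'I_n},
    [/\ d \in H, injective f & copy_edges (H :\ d) f \subset G].
Proof.
move=> GK GnK perc.
have [e0 e0K e0G] : exists2 e0, e0 \in Kn n & e0 \notin G.
  by apply/subsetPn; apply: contra GnK => KG; rewrite eqEsubset GK KG.
have /subsetPn [e eS eG] : ~~ (boot_step H G \subset G).
  have [t et] := perc e0 e0K.
  by apply: contra e0G => /(iter_boot_step_fixed t) <-.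
move: eS; rewrite /boot_step inE (negbTE eG) /= inE
  => /andP[_ /existsP[f /and3P[/injectiveP fi /imsetP[d dH ed] fH]]].
exists d, f; split => //.
apply/subsetP => _ /imsetP[d' /setD1P[d'd d'H] ->].
have := subsetP fH _ (imset_f _ d'H).
rewrite inE in_set1 ed => /orP[//|/eqP /(imset_inj fi) dd].
by rewrite dd eqxx in d'd.
Qed.

Definition copies {V : finType} (n : nat) (D : {set {set V}}) : {set {set {set 'I_n}}} :=
  [set copy_edges D f | f : {ffun V -> 'I_n} in [pred f : {ffun V -> 'I_n} | injectiveb f]].

Lemma mem_copies {V : finType} {n : nat} (D : {set {set V}}) {f : {ffun V -> 'I_n}} :
  injective f -> copy_edges D f \in copies n D.
Proof. by move=> fi; apply/imsetP; exists f; rewrite // inE; apply/injectiveP. Qed.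

Lemma copies_sub_Kn {V : finType} {n : nat} {D : {set {set V}}} {E : {set {set 'I_n}}} :
  simple_graph D -> E \in copies n D -> E \subset Kn n /\ #|E| = #|D|.
Proof.
move=> Ds /imsetP[f]; rewrite inE => /injectiveP fi ->; split.
  by apply/subsetP => _ /imsetP[e eD ->]; rewrite inE card_imset // Ds.
by rewrite card_imset //; apply: imset_inj.
Qed.

(* A copy of D is determined by the restriction of its vertex map to S. *)
Lemma card_copies_le {V : finType} {n : nat} {S : {set V}} {D : {set {set V}}}
    (i0 : 'I_n) :
  (forall d, d \in D -> d \subset S) -> (#|copies n D| <= n ^ #|S|)%N.
Proof.
move=> DS.
pose ext (g : {ffun {x : V | x \in S} -> 'I_n}) (x : V) : 'I_n :=
  if insub x is Some y then g y else i0.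
have sub : copies n D \subset (fun g => copy_edges D (ext g)) @: setT.
  apply/subsetP => _ /imsetP[f _ ->]; apply/imsetP.
  exists [ffun y => f (val y)] => //.
  apply: eq_in_imset => d dD; apply: eq_in_imset => x xd.
  rewrite /ext; case: insubP => [y _ <-|]; first by rewrite ffunE.
  by rewrite (subsetP (DS d dD) x xd).
apply: leq_trans (subset_leq_card sub) (leq_trans (leq_imset_card _ _) _).
by rewrite cardsT card_ffun card_ord card_sig.
Qed.

Lemma expected_copies_le {R : realType} {V : finType} {n : nat} {p : R}
    {S : {set V}} {D : {set {set V}}} :
  simple_graph D -> 0 <= p <= 1 -> (0 < n)%N -> (forall d, d \in D -> d \subset S) ->
  \sum_(G : {set {set 'I_n}} | G \subset Kn n) \sum_(E in copies n D)
     p ^+ #|G| * (1 - p) ^+ (#|Kn n| - #|G|) * (E \subset G)%:R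
  <= (n ^ #|S|)%N%:R * p ^+ #|D|.
Proof.
move=> Ds p01 n0 DS; rewrite exchange_big /=.
apply: le_trans (_ : \sum_(E in copies n D) p ^+ #|D| <= _).
  apply: ler_sum => E EC; have [EK <-] := copies_sub_Kn Ds EC.
  apply: le_trans (sum_weight_supsets_le p p01 EK).
  rewrite big_mkcondr /=; apply: ler_sum => G _.
  by case: (E \subset G); rewrite ?mulr1 ?mulr0.
have /andP[p0 _] := p01.
rewrite sumr_const -[_ *+ _]mulr_natl ler_wpM2r ?exprn_ge0 // ler_nat.
exact: (card_copies_le (Ordinal n0) DS).
Qed.

Lemma prob_perc_le_first_moment {R : realType} {V : finType} {H : {set {set V}}}
    {n : nat} {p : R} (S : {set V} -> {set V}) (D : {set V} -> {set {set V}}) :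
  simple_graph H -> 0 <= p <= 1 -> (2 <= n)%N ->
  (forall d, d \in H -> D d \subset H :\ d) ->
  (forall d, d \in H -> forall e, e \in D d -> e \subset S d) ->
  prob_perc n H p <= p + \sum_(d in H) (n ^ #|S d|)%N%:R * p ^+ #|D d|.
Proof.
move=> Hs p01 n2 DH DS; have /andP[p0 p1] := p01.
have q0 : 0 <= 1 - p by rewrite subr_ge0.
pose w (G : {set {set 'I_n}}) := p ^+ #|G| * (1 - p) ^+ (#|Kn n| - #|G|).
have w0 G : 0 <= w G by rewrite mulr_ge0 // exprn_ge0.
pose hits (G : {set {set 'I_n}}) : R :=
  \sum_(d in H) \sum_(E in copies n (D d)) (E \subset G)%:R.
have hits0 G : 0 <= hits G by apply: sumr_ge0 => d _; apply: sumr_ge0.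
have union (G : {set {set 'I_n}}) :
    G \subset Kn n -> percolates H G -> 1 <= (G == Kn n)%:R + hits G.
  move=> GK perc; have [->|GnK] := eqVneq G (Kn n); first by rewrite lerDl.
  have [d [f [dH fi fG]]] := percolates_copy_minus_edge GK GnK perc.
  rewrite add0r; apply: le_trans (ler_sum_term (mem H) dH _); last first.
    by move=> i _; apply: sumr_ge0.
  apply: le_trans (ler_sum_term _ (mem_copies (D d) fi) _) => //.
  by rewrite (subset_trans (imsetS _ (DH d dH)) fG).
have Dsimple d : d \in H -> simple_graph (D d).
  by move=> dH e /(subsetP (DH d dH)) /setD1P[_ /Hs].
have wK : w (Kn n) <= p.
  have Kn0 : (0 < #|Kn n|)%N.
    by apply/card_gt0P; exists [set Ordinal (ltnW n2); Ordinal n2]; rewrite inE cards2.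
  rewrite /w subnn expr0 mulr1 -(prednK Kn0) exprS.
  by rewrite ler_piMr ?exprn_ile1.
rewrite /prob_perc.
apply: le_trans (_ : \sum_(G : {set {set 'I_n}} | G \subset Kn n)
                       w G * ((G == Kn n)%:R + hits G) <= _).
  apply: ler_sum => G GK; case: asboolP => [perc|_]; last by rewrite mulr_ge0 ?addr_ge0.
  by rewrite -[leLHS]mulr1 -/(w G) ler_wpM2l ?union.
under eq_bigr do rewrite mulrDr; rewrite big_split /= (bigD1 (Kn n)) //= eqxx mulr1.
rewrite big1 => [|G /andP[_ /negbTE->]]; last by rewrite mulr0.
rewrite addr0 lerD // /hits.
under eq_bigr do rewrite mulr_sumr.
under eq_bigr => G _ do under eq_bigr do rewrite mulr_sumr.
rewrite exchange_big /=; apply: ler_sum => d dH.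
exact: expected_copies_le (Dsimple d dH) p01 (ltnW n2) (DS d dH).
Qed.

Definition subgraph_avoiding {V : finType} (H : {set {set V}}) (e : {set V})
    (F : {set V} * {set {set V}}) : bool :=
  [&& F.1 != set0, F.2 \subset H :\ e & [forall d in F.2, d \subset F.1]].

Definition density (R : realType) {V : finType} (F : {set V} * {set {set V}}) : R :=
  #|F.2|%:R / #|F.1|%:R.

Section Density.
Context (R : realType) {V : finType} {H : {set {set V}}}.

Lemma maxdens_gt0 {e : {set V}} : (1 < #|H|)%N -> e \in H -> 0 < maxdens R H e.
Proof.
move=> H1 eH.
have V0 : (0 < #|V|)%N.
  rewrite lt0n; apply: contraTneq H1 => V0.
  rewrite -leqNgt (leq_trans (max_card H)) //.
  by rewrite -cardsT -powersetT card_powerset cardsT V0.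
have : density R (setT, H :\ e) <= maxdens R H e.
  apply: le_bigmax_cond; apply/and3P; split => //=; first by rewrite -card_gt0 cardsT.
  by apply/forall_inP => d _; apply: subsetT.
apply: lt_le_trans; rewrite divr_gt0 // ltr0n ?cardsT //.
by rewrite (cardsD1 e) eH in H1.
Qed.

Lemma lambda_star_gt0 : (1 < #|H|)%N -> 0 < lambda_star R H.
Proof.
move=> H1; apply: lt_bigmin => [|e eH]; first by rewrite ltr0n ltnW.
exact: maxdens_gt0.
Qed.

Lemma lambda_star_le_maxdens {e : {set V}} : e \in H -> lambda_star R H <= maxdens R H e.
Proof. exact: bigmin_le_cond. Qed.

Lemma dense_subgraph_avoiding {e : {set V}} {x : R} : 0 < x -> x <= maxdens R H e ->
  [exists F, subgraph_avoiding H e F && (x <= density R F)].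
Proof.
move=> x0; apply: contraLR => /existsPn sparse.
rewrite -ltNge; apply: bigmax_lt => // F HF.
by move: (sparse F); rewrite /subgraph_avoiding HF /= -ltNge.
Qed.

End Density.

Lemma first_moment_term_le (R : realType) (n s m : nat) (lam c p : R) :
  0 < lam -> (0 < n)%N -> (0 < s)%N -> lam * s%:R <= m%:R -> 0 < c <= 1 ->
  0 <= p <= c * n%:R `^ (- lam^-1) -> (n ^ s)%N%:R * p ^+ m <= c.
Proof.
move=> lam0 n0 s0 lsm /andP[c0 c1] /andP[p0 pb].
have m0 : (0 < m)%N by rewrite -(ltr0n R) (lt_le_trans _ lsm) // mulr_gt0 ?ltr0n.
have n1 : 1 <= (n%:R : R) by rewrite ler1n.
set x := n%:R `^ (- lam^-1).
have x0 : 0 <= x by apply/ltW/powR_gt0; rewrite ltr0n.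
have ns0 : 0 < (n%:R : R) ^+ s by rewrite exprn_gt0 // ltr0n.
have pm : p ^+ m <= c * x ^+ m.
  apply: le_trans (lerXn2r m _ _ pb) _; rewrite ?nnegrE ?mulr_ge0 ?(ltW c0) //.
  by rewrite exprMn ler_wpM2r ?exprn_ge0 // -(prednK m0) exprS ler_piMr ?exprn_ile1 ?(ltW c0).
have xm : x ^+ m <= ((n%:R : R) ^+ s)^-1.
  rewrite -powR_mulrn // /x -powRrM -powR_mulrn ?ler0n // -powRN.
  apply: (ler_powR n1).
  by rewrite mulNr lerN2 -(ler_pM2l lam0) mulrA mulrV ?unitfE ?gt_eqF // mul1r.
rewrite natrX; apply: le_trans (ler_wpM2l (ltW ns0) pm) _.
rewrite mulrCA -[leRHS]mulr1 ler_wpM2l ?(ltW c0) //.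
apply: le_trans (ler_wpM2l (ltW ns0) xm) _.
by rewrite mulrV ?unitfE ?gt_eqF.
Qed.

Lemma prob_perc_le_of_small_p {R : realType} {V : finType} {H : {set {set V}}}
    {n : nat} {c p : R} :
  simple_graph H -> (1 < #|H|)%N -> (2 <= n)%N -> 0 < c <= 1 -> 0 <= p <= 1 ->
  p <= c * n%:R `^ (- (lambda_star R H)^-1) ->
  prob_perc n H p <= (#|H| + 1)%N%:R * c.
Proof.
move=> Hs H1 n2 c01 p01 pb; set lam := lambda_star R H in pb.
have lam0 : 0 < lam := lambda_star_gt0 R H1.
pose F d := odflt (setT, set0)
  [pick F | subgraph_avoiding H d F && (lam <= density R F)].
have FP d : d \in H -> subgraph_avoiding H d (F d) && (lam <= density R (F d)).
  move=> dH; rewrite /F; case: pickP => [//|none].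
  have /existsP[G] := dense_subgraph_avoiding R lam0 (lambda_star_le_maxdens R dH).
  by rewrite none.
have FH d : d \in H -> (F d).2 \subset H :\ d by move=> /FP /andP[/and3P[]].
have FS d : d \in H -> forall e, e \in (F d).2 -> e \subset (F d).1.
  by move=> /FP /andP[/and3P[_ _ /forall_inP]].
apply: le_trans (prob_perc_le_first_moment _ _ Hs p01 n2 FH FS) _.
have pc : p <= c.
  have /andP[c0 _] := c01; apply: le_trans pb _; rewrite ler_piMr ?(ltW c0) //.
  rewrite -[leRHS](powRr0 n%:R); apply: ler_powR; first by rewrite ler1n ltnW.
  by rewrite oppr_le0 invr_ge0 ltW.
rewrite natrD mulrDl mul1r addrC mulr_natl -sumr_const lerD ?ler_sum // => d dH.
have /andP[/and3P[F0 _ _] Fdense] := FP d dH.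
apply: first_moment_term_le lam0 (ltnW n2) _ _ c01 _; first by rewrite card_gt0.
  by rewrite -ler_pdivlMr ?ltr0n ?card_gt0.
by have /andP[-> _] := p01.
Qed.

Lemma prob_perc_one {R : realType} {V : finType} {n : nat} {H : {set {set V}}} :
  1 <= prob_perc n H (1 : R).
Proof.
rewrite /prob_perc (bigD1 (Kn n)) //=; case: asboolP => [_|]; last first.
  by case=> e eK; exists 0%N.
rewrite expr1n subnn expr0 mulr1 lerDl sumr_ge0 // => G _.
by case: ifP => // _; rewrite subrr mulr_ge0 ?exprn_ge0.
Qed.

Theorem proposition5p2 (R : realType) (V : finType) (H : {set {set V}}) :
  simple_graph H -> (1 < #|H|)%N ->
  exists c : R, 0 < c /\
    forall n : nat, (2 <= n)%N ->
      c * ((n%:R : R) `^ (- (lambda_star R H)^-1)) <= p_c R n H.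
Proof.
move=> Hs H1; pose c : R := ((4 * (#|H| + 1))%N%:R)^-1.
have c0 : 0 < c by rewrite invr_gt0 ltr0n muln_gt0 addn1.
have c1 : c <= 1 by rewrite invf_le1 ?ltr0n ?ler1n muln_gt0 addn1.
have quarter : (#|H| + 1)%N%:R * c = 4^-1.
  by rewrite /c natrM invfM mulrCA mulfV ?mulr1 // pnatr_eq0 addn1.
exists c; split => // n n2; apply: lb_le_inf.
  exists 1; split; first by rewrite ler01 lexx.
  by apply: le_trans prob_perc_one; rewrite invf_le1 ?ltr0n ?ler1n.
move=> p [p01 half]; rewrite leNgt; apply/negP => small.
have c01 : 0 < c <= 1 by rewrite c0 c1.
have := prob_perc_le_of_small_p Hs H1 n2 c01 p01 (ltW small).
rewrite quarter; lra.
Qed.
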